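(* Let $(H,A,C)$ be a Doi-Hopf datum in which $H$ is a Hopf algebra, and let $\nu: GF\to 1_{\mathcal C}$ be a natural transformation, where $\mathcal C={}^C\mathcal M(H)_A$. Write $\nu:=\nu_{C\otimes A}: C\otimes C\otimes A\to C\otimes A$ (here $C\otimes A=G(A)$ and $C\otimes C\otimes A=GFG(A)$). Then for all $a,b\in A$ and $c,d\in C$: (i) $\nu(c\otimes d\otimes ba)=b\cdot \nu(c\otimes d\otimes a)$, where $b\cdot(c'\otimes a')=c'\otimes ba'$; (ii) writing $\theta_{d'}:=(\varepsilon_C\otimes I_A)\nu(c\otimes d'\otimes 1_A)\in A$, one has $$\sum d_{(2)}\cdot (\theta_{d_{(1)}})_{<-1>}\otimes (\theta_{d_{(1)}})_{<0>}=\nu(c\otimes d\otimes 1_A).$$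
   Context: $k$ is a commutative ring; all (co)algebras, tensor products and maps are over $k$. Sweedler notation: $\Delta(c)=\sum c_{(1)}\otimes c_{(2)}$; for a left comodule, $\rho(m)=\sum m_{<-1>}\otimes m_{<0>}$, iterated as $\sum m_{<-2>}\otimes m_{<-1>}\otimes m_{<0>}$. A Doi-Hopf datum $(H,A,C)$ consists of a bialgebra $H$; a left $H$-comodule algebra $A$ (an algebra with a left $H$-coaction $\rho_A$ that is an algebra map); and a right $H$-module coalgebra $C$ (a coalgebra with a right $H$-action $c\cdot h$ such that $\Delta(c\cdot h)=\sum c_{(1)}\cdot h_{(1)}\otimes c_{(2)}\cdot h_{(2)}$ and $\varepsilon(c\cdot h)=\varepsilon(c)\varepsilon(h)$). $C$ is assumed flat over $k$. A Doi-Hopf module is a right $A$-module $M$ with a left $C$-coaction $\rho_M$ such that $\rho_M(ma)=\sum m_{<-1>}\cdot a_{<-1>}\otimes m_{<0>}a_{<0>}$; $\mathcal C={}^C\mathcal M(H)_A$ denotes the category of Doi-Hopf modules with $A$-linear $C$-colinear maps. $F:\mathcal C\to\mathcal M_A$ forgets the coaction; its right adjoint $G:\mathcal M_A\to\mathcal C$ is $G(N)=C\otimes N$ with $(c\otimes n)a=\sum c\cdot a_{<-1>}\otimes na_{<0>}$ and $\rho(c\otimes n)=\sum c_{(1)}\otimes c_{(2)}\otimes n$. The unit of the adjunction is $\rho_M:M\to C\otimes M$ (the coaction). In particular $C\otimes C\otimes A$ has action $(c\otimes d\otimes b)a=\sum c\cdot a_{<-2>}\otimes d\cdot a_{<-1>}\otimes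 ba_{<0>}$ and coaction $c\otimes d\otimes b\mapsto \sum c_{(1)}\otimes c_{(2)}\otimes d\otimes b$. *)

From HB Require Import structures.
From mathcomp Require Import all_boot all_algebra.
From mathcomp Require Import boolp.
Set Implicit Arguments. Unset Strict Implicit. Unset Printing Implicit Defensive.
Import GRing.Theory.
Local Open Scope ring_scope.
Local Open Scope quotient_scope.

Section Tensor.
Variables (R : comPzRingType) (U V : lmodType R).

Definition bilinear_map (W : lmodType R) (f : U -> V -> W) : Prop :=
  (forall v a x y, f (a *: x + y) v = a *: f x v + f y v) /\
  (forall u a x y, f u (a *: x + y) = a *: f u x + f u y).

Definition tsum (W : lmodType R) (f : U -> V -> W) (s : seq (U * V)) : W :=
  \sum_(p <- s) f p.1 p.2.

Definition teqv (s t : seq (U * V)) : bool :=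
  `[< forall (W : lmodType R) (f : U -> V -> W), bilinear_map f -> tsum f s = tsum f t >].

Lemma teqv_refl : reflexive teqv.
Proof. by move=> s; apply/asboolP. Qed.
Lemma teqv_sym : symmetric teqv.
Proof.
move=> s t; apply/asboolP/asboolP => H W f hf; exact/esym/H.
Qed.
Lemma teqv_trans : transitive teqv.
Proof.
move=> t s u /asboolP H1 /asboolP H2; apply/asboolP => W f hf.
by rewrite H1 // H2.
Qed.

Canonical teqv_equiv := EquivRel teqv teqv_refl teqv_sym teqv_trans.

Definition tensor := {eq_quot teqv}.
HB.instance Definition _ : EqQuotient _ teqv tensor := EqQuotient.on tensor.
HB.instance Definition _ := Choice.on tensor.

Lemma teqv_reprK (s : seq (U * V)) : teqv (repr (\pi_tensor s)) s.
Proof. by rewrite -eqmodE reprK. Qed.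

Lemma bil0l (W : lmodType R) (f : U -> V -> W) v : bilinear_map f -> f 0 v = 0.
Proof.
move=> [h _]; have := h v 1 0 0; rewrite !scale1r addr0 => e.
by apply: (addrI (f 0 v)); rewrite addr0 -e.
Qed.

Lemma bilNl (W : lmodType R) (f : U -> V -> W) u v : bilinear_map f -> f (- u) v = - f u v.
Proof.
move=> hf; have := hf.1 v (-1) u 0; rewrite addr0 scaleN1r => ->.
by rewrite (bil0l _ hf) addr0 scaleN1r.
Qed.

Lemma bilZl (W : lmodType R) (f : U -> V -> W) a u v : bilinear_map f -> f (a *: u) v = a *: f u v.
Proof. by move=> hf; have := hf.1 v a u 0; rewrite !addr0 (bil0l _ hf) addr0. Qed.

Lemma bilDl (W : lmodType R) (f : U -> V -> W) u u' v : bilinear_map f -> f (u + u') v = f u v + f u' v.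
Proof. by move=> hf; have := hf.1 v 1 u u'; rewrite !scale1r. Qed.

Lemma tsum_cat (W : lmodType R) (f : U -> V -> W) s t : tsum f (s ++ t) = tsum f s + tsum f t.
Proof. by rewrite /tsum big_cat. Qed.

Definition tneg (s : seq (U * V)) := map (fun p => (- p.1, p.2)) s.
Definition tscl (a : R) (s : seq (U * V)) := map (fun p => (a *: p.1, p.2)) s.

Lemma tsum_neg (W : lmodType R) (f : U -> V -> W) s : bilinear_map f -> tsum f (tneg s) = - tsum f s.
Proof.
move=> hf; rewrite /tsum big_map -sumrN; apply: eq_bigr => p _; exact: bilNl.
Qed.
Lemma tsum_scl (W : lmodType R) (f : U -> V -> W) a s : bilinear_map f -> tsum f (tscl a s) = a *: tsum f s.
Proof.
move=> hf; rewrite /tsum big_map scaler_sumr; apply: eq_bigr => p _; exact: bilZl.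
Qed.

Definition tadd := lift_op2 tensor (fun s t => s ++ t).
Lemma pi_tadd : {morph \pi_tensor : s t / s ++ t >-> tadd s t}.
Proof.
move=> s t; unlock tadd; apply/eqmodP/asboolP => W f hf.
have /asboolP h1 := teqv_reprK s; have /asboolP h2 := teqv_reprK t.
by rewrite !tsum_cat h1 ?h2.
Qed.
Canonical pi_tadd_morph := PiMorph2 pi_tadd.

Definition topp := lift_op1 tensor tneg.
Lemma pi_topp : {morph \pi_tensor : s / tneg s >-> topp s}.
Proof.
move=> s; unlock topp; apply/eqmodP/asboolP => W f hf.
have /asboolP h1 := teqv_reprK s; by rewrite !tsum_neg // h1.
Qed.
Canonical pi_topp_morph := PiMorph1 pi_topp.

Definition tzero : tensor := \pi_tensor [::].

Lemma taddA : associative tadd.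
Proof.
by elim/quotW=> x; elim/quotW=> y; elim/quotW=> z; rewrite !piE catA.
Qed.
Lemma taddC : commutative tadd.
Proof.
elim/quotW=> x; elim/quotW=> y; rewrite !piE; apply/eqmodP/asboolP => W f hf.
by rewrite !tsum_cat addrC.
Qed.
Lemma tadd0 : left_id tzero tadd.
Proof. by elim/quotW=> x; rewrite /tzero !piE. Qed.
Lemma taddN : left_inverse tzero topp tadd.
Proof.
elim/quotW=> x; rewrite /tzero !piE; apply/eqmodP/asboolP => W f hf.
by rewrite tsum_cat tsum_neg // addNr /tsum big_nil.
Qed.

HB.instance Definition _ := GRing.isZmodule.Build tensor taddA taddC tadd0 taddN.

Definition tscale (a : R) := lift_op1 tensor (tscl a).
Lemma pi_tscale a : {morph \pi_tensor : s / tscl a s >-> tscale a s}.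
Proof.
move=> s; unlock tscale; apply/eqmodP/asboolP => W f hf.
have /asboolP h1 := teqv_reprK s; by rewrite !tsum_scl // h1.
Qed.
Canonical pi_tscale_morph a := PiMorph1 (pi_tscale a).

Lemma tscaleA a b (x : tensor) : tscale a (tscale b x) = tscale (a * b) x.
Proof.
elim/quotW: x => x; rewrite !piE /tscl -map_comp; congr (\pi _).
by apply: eq_map => p /=; rewrite scalerA.
Qed.
Lemma tscale1 : left_id 1 tscale.
Proof.
elim/quotW=> x; rewrite !piE /tscl; congr (\pi _).
by rewrite -[RHS]map_id; apply: eq_map => -[u v] /=; rewrite scale1r.
Qed.
Lemma tscaleDr : right_distributive tscale (@GRing.add tensor).
Proof.
move=> a; elim/quotW=> x; elim/quotW=> y.
rewrite /GRing.add /= !piE; by rewrite /tscl map_cat.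
Qed.
Lemma tscaleDl (x : tensor) : {morph tscale^~ x : a b / a + b}.
Proof.
move=> a b; elim/quotW: x => x.
rewrite /GRing.add /= !piE; apply/eqmodP/asboolP => W f hf.
rewrite tsum_cat !tsum_scl // scalerDl //.
Qed.

HB.instance Definition _ := GRing.Zmodule_isLmodule.Build R tensor
  tscaleA tscale1 tscaleDr tscaleDl.

Definition tmul (u : U) (v : V) : tensor := \pi_tensor [:: (u, v)].

Definition tlift (W : lmodType R) (f : U -> V -> W) (x : tensor) : W :=
  tsum f (repr x).

End Tensor.

Arguments tmul {R U V}.
Arguments tlift {R U V W}.

Notation "u ⊗ v" := (tmul u v) (at level 42, right associativity) : ring_scope.

Section DoiHopf.
Variable k : comPzRingType.

Definition klinear (U V : lmodType k) (f : U -> V) : Prop :=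
  forall (a : k) x y, f (a *: x + y) = a *: f x + f y.
Definition kform (U : lmodType k) (f : U -> k) : Prop :=
  forall (a : k) x y, f (a *: x + y) = a * f x + f y.

Definition tmap (U V U' V' : lmodType k) (f : U -> U') (g : V -> V')
  (x : tensor U V) : tensor U' V' := tlift (fun u v => f u ⊗ g v) x.

Definition tensor_mul (X Y : algType k) (x y : tensor X Y) : tensor X Y :=
  tlift (fun a b => tlift (fun a' b' => (a * a') ⊗ (b * b')) y) x.

(* coalgebra (D, Delta, eps): Delta, eps linear, coassociative, counital.
   (C ⊗ C) ⊗ C is identified with C ⊗ (C ⊗ C). *)
Definition is_coalgebra (D : lmodType k) (Delta : D -> tensor D D) (eps : D -> k) : Prop :=
  ((klinear Delta) /\
     (kform eps) /\
     ((forall c, tlift (fun c1 c2 => tlift (fun x y => x ⊗ (y ⊗ c2)) (Delta c1)) (Delta c)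
                 = tlift (fun c1 c2 => c1 ⊗ Delta c2) (Delta c))) /\
     ((forall c, tlift (fun c1 c2 => eps c1 *: c2) (Delta c) = c)) /\
     ((forall c, tlift (fun c1 c2 => eps c2 *: c1) (Delta c) = c))).

Definition is_bialgebra (H : algType k) (Delta : H -> tensor H H) (eps : H -> k) : Prop :=
  ((is_coalgebra Delta eps) /\
     ((forall g h, Delta (g * h) = tensor_mul (Delta g) (Delta h))) /\
     (Delta 1 = 1 ⊗ 1) /\
     ((forall g h, eps (g * h) = eps g * eps h)) /\
     (eps 1 = 1)).

Definition is_hopf_algebra (H : algType k) (Delta : H -> tensor H H) (eps : H -> k) : Prop :=
  is_bialgebra Delta eps /\
  exists S : H -> H, ((klinear S) /\
     ((forall h, tlift (fun h1 h2 => S h1 * h2) (Delta h) = eps h *: 1)) /\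
     ((forall h, tlift (fun h1 h2 => h1 * S h2) (Delta h) = eps h *: 1))).

Definition is_comodule_algebra (H A : algType k) (Delta : H -> tensor H H) (eps : H -> k)
  (rho : A -> tensor H A) : Prop :=
  ((klinear rho) /\
     ((forall a, tlift (fun h a' => tlift (fun x y => x ⊗ (y ⊗ a')) (Delta h)) (rho a)
                 = tlift (fun h a' => h ⊗ rho a') (rho a))) /\
     ((forall a, tlift (fun h a' => eps h *: a') (rho a) = a)) /\
     ((forall a b, rho (a * b) = tensor_mul (rho a) (rho b))) /\
     (rho 1 = 1 ⊗ 1)).

Definition is_module_coalgebra (H : algType k) (Delta : H -> tensor H H) (eps : H -> k)
  (C : lmodType k) (DeltaC : C -> tensor C C) (epsC : C -> k) (act : C -> H -> C) : Prop :=
  ((is_coalgebra DeltaC epsC) /\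
     (bilinear_map act) /\
     ((forall c, act c 1 = c)) /\
     ((forall c g h, act (act c g) h = act c (g * h))) /\
     ((forall c h, DeltaC (act c h)
          = tlift (fun c1 c2 => tlift (fun h1 h2 => act c1 h1 ⊗ act c2 h2) (Delta h)) (DeltaC c))) /\
     ((forall c h, epsC (act c h) = epsC c * eps h))).

Definition flat (C : lmodType k) : Prop :=
  forall (M N : lmodType k) (f : M -> N), klinear f -> injective f ->
    injective (tmap (@id C) f).

Section DoiHopfModules.
Variables (H A : algType k) (rhoA : A -> tensor H A) (C : lmodType k)
  (DeltaC : C -> tensor C C) (epsC : C -> k) (actC : C -> H -> C).

Definition is_doi_hopf_module (M : lmodType k) (act : M -> A -> M) (co : M -> tensor C M) : Prop :=
  ((bilinear_map act) /\
     ((forall m, act m 1 = m)) /\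
     ((forall m a b, act (act m a) b = act m (a * b))) /\
     (klinear co) /\
     ((forall m, tlift (fun c m' => tlift (fun x y => x ⊗ (y ⊗ m')) (DeltaC c)) (co m)
                 = tlift (fun c m' => c ⊗ co m') (co m))) /\
     ((forall m, tlift (fun c m' => epsC c *: m') (co m) = m)) /\
     ((forall m a, co (act m a)
          = tlift (fun c m' => tlift (fun h a' => actC c h ⊗ act m' a') (rhoA a)) (co m)))).

Record dhmod := DHMod {
  dh_car : lmodType k;
  dh_act : dh_car -> A -> dh_car;
  dh_co : dh_car -> tensor C dh_car;
  dh_ax : is_doi_hopf_module dh_act dh_co }.

Definition dh_morphism (M N : dhmod) (f : dh_car M -> dh_car N) : Prop :=
  ((klinear f) /\
     ((forall m a, f (dh_act m a) = dh_act (f m) a)) /\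
     ((forall m, dh_co (f m) = tmap id f (dh_co m)))).

(* the right adjoint G : M_A -> C, G(N) = C ⊗ N *)
Definition Gact (N : lmodType k) (actN : N -> A -> N) (x : tensor C N) (a : A) : tensor C N :=
  tlift (fun c n => tlift (fun h a' => actC c h ⊗ actN n a') (rhoA a)) x.
Definition Gco (N : lmodType k) (x : tensor C N) : tensor C (tensor C N) :=
  tlift (fun c n => tlift (fun c1 c2 => c1 ⊗ (c2 ⊗ n)) (DeltaC c)) x.

Definition is_nat_trans_GF (nu : forall M : dhmod, tensor C (dh_car M) -> dh_car M) : Prop :=
  (forall M : dhmod,
     ((klinear (nu M)) /\
     ((forall x a, nu M (Gact (@dh_act M) x a) = dh_act (nu M x) a)) /\
     ((forall x, dh_co (nu M x) = tmap id (nu M) (Gco x))))) /\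
  (forall (M N : dhmod) (f : dh_car M -> dh_car N), dh_morphism f ->
     forall x, f (nu M x) = nu N (tmap id f x)).

End DoiHopfModules.
End DoiHopf.

(* Both identities are naturality of [nu] at well-chosen morphisms of Doi-Hopf
   modules: the coaction M -> GF(M) of a Doi-Hopf module, and G(f) for a right
   A-linear map f, since [G N = C ⊗ N] is functorial in N.
   (i) Left multiplication by b is right A-linear on A, so G(b·) is an
   endomorphism of G(A).
   (ii) Put x = c ⊗ d ⊗ 1. By the counit axiom nu(x) = (ε ⊗ I) ρ(nu(x)), and
   naturality at the coaction ρ of G(A) turns ρ(nu(x)) into
   Σ nu(c ⊗ d_(1) ⊗ (d_(2) ⊗ 1)). Now c ⊗ d_(1) ⊗ n is the image of c ⊗ d_(1) ⊗ 1
   under G of the right A-linear map a ↦ n·a : A -> C ⊗ A, so naturality there,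
   followed by ε ⊗ I, yields Σ (d_(2) ⊗ 1)·θ_{d_(1)}. *)

From Pilot Require Import Defs.
From HB Require Import structures.
From mathcomp Require Import all_boot all_algebra.
From mathcomp Require Import boolp.
Import GRing.Theory.
Local Open Scope ring_scope.
Local Open Scope quotient_scope.
Set Implicit Arguments. Unset Strict Implicit. Unset Printing Implicit Defensive.

Section Linear.
Variables (R : comPzRingType) (U W : lmodType R) (L : U -> W).
Hypothesis linL : klinear L.

Lemma klinearD : {morph L : x y / x + y}.
Proof. by move=> x y; have := linL 1 x y; rewrite !scale1r. Qed.

Lemma klinear0 : L 0 = 0.
Proof. by apply: (addrI (L 0)); rewrite -klinearD !addr0. Qed.

Lemma klinearZ a x : L (a *: x) = a *: L x.
Proof. by have := linL a x 0; rewrite !addr0 klinear0 addr0. Qed.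

End Linear.

Lemma klinear_id (R : comPzRingType) (U : lmodType R) : klinear (@id U).
Proof. by []. Qed.

Lemma mulr_bilinear (k : comPzRingType) (A : algType k) : bilinear_map (fun m a : A => m * a).
Proof.
split=> [v a x y|u a x y]; first by rewrite mulrDl scalerAl.
by rewrite mulrDr scalerAr.
Qed.

Section TensorLift.
Variables (R : comPzRingType) (U V W : lmodType R).

Lemma bilinear_mapP (f : U -> V -> W) :
  (forall v, klinear (f^~ v)) -> (forall u, klinear (f u)) -> bilinear_map f.
Proof. by move=> h1 h2; split=> [v|u]; [apply: h1|apply: h2]. Qed.

Lemma tlift_pi (f : U -> V -> W) s :
  bilinear_map f -> tlift f (\pi_(tensor U V) s) = tsum f s.
Proof. by move=> hf; have /asboolP := teqv_reprK s; apply. Qed.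

Lemma tmul_bilinear : bilinear_map (@tmul R U V).
Proof.
have tmulE u v : u ⊗ v = \pi_(tensor U V) [:: (u, v)] by [].
split=> [v a x y|u a x y]; rewrite !tmulE.
- transitivity (tadd (tscale a (\pi_(tensor U V) [:: (x, v)]))
                     (\pi_(tensor U V) [:: (y, v)])) => //.
  rewrite -pi_tscale -pi_tadd; apply/eqmodP/asboolP => W' f hf.
  by rewrite /tsum /= !big_cons !big_nil /= !addr0 hf.1 (bilZl (f:=f)).
- transitivity (tadd (tscale a (\pi_(tensor U V) [:: (u, x)]))
                     (\pi_(tensor U V) [:: (u, y)])) => //.
  rewrite -pi_tscale -pi_tadd; apply/eqmodP/asboolP => W' f hf.
  by rewrite /tsum /= !big_cons !big_nil /= !addr0 hf.2 (bilZl (f:=f)).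
Qed.

Lemma tensor_sum (x : tensor U V) : x = \sum_(p <- repr x) (p.1 ⊗ p.2).
Proof.
rewrite -[LHS]reprK; elim: (repr x) => [|[u v] s IH]; first by rewrite big_nil.
by rewrite big_cons -IH /GRing.add /= -pi_tadd.
Qed.

Lemma additive_tensor_ext (Z : zmodType) (F G : tensor U V -> Z) :
  {morph F : x y / x + y} -> {morph G : x y / x + y} ->
  (forall u v, F (u ⊗ v) = G (u ⊗ v)) -> F =1 G.
Proof.
move=> hF hG e x; rewrite (tensor_sum x); elim: (repr x) => [|p s IH].
  rewrite !big_nil; have F0 : F 0 = 0 by apply: (addrI (F 0)); rewrite -hF !addr0.
  by rewrite F0; apply: (addrI (G 0)); rewrite -hG !addr0.
by rewrite !big_cons hF hG IH e.
Qed.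

Lemma eq_tlift (f g : U -> V -> W) x : (forall u v, f u v = g u v) -> tlift f x = tlift g x.
Proof. by move=> e; apply: eq_bigr => p _; rewrite e. Qed.

Variable f : U -> V -> W.

Lemma tlift_morph (W' : lmodType R) (L : W -> W') x :
  {morph L : a b / a + b} -> tlift (fun u v => L (f u v)) x = L (tlift f x).
Proof.
move=> hL; have L0 : L 0 = 0 by apply: (addrI (L 0)); rewrite -hL !addr0.
by rewrite /tlift /tsum (big_morph L hL L0).
Qed.

Lemma tlift_linear_param (P : lmodType R) (g : P -> U -> V -> W) x a p p' :
  (forall u v, g (a *: p + p') u v = a *: g p u v + g p' u v) ->
  tlift (g (a *: p + p')) x = a *: tlift (g p) x + tlift (g p') x.
Proof. by move=> e; rewrite (eq_tlift _ e) /tlift /tsum big_split /= scaler_sumr. Qed.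

Hypothesis bf : bilinear_map f.

Lemma tlift_tmul u v : tlift f (u ⊗ v) = f u v.
Proof. by rewrite tlift_pi // /tsum big_cons big_nil addr0. Qed.

Lemma tlift_linear : klinear (tlift f).
Proof.
move=> a x y.
have -> : a *: x + y = \pi_(tensor U V) (tscl a (repr x) ++ repr y).
  by rewrite pi_tadd pi_tscale !reprK.
by rewrite tlift_pi // tsum_cat tsum_scl // /tlift.
Qed.

Lemma tliftD : {morph tlift f : x y / x + y}.
Proof. exact: klinearD tlift_linear. Qed.

End TensorLift.

Lemma exchange_tlift (R : comPzRingType) (U V U' V' W : lmodType R)
    (g : U -> V -> U' -> V' -> W) (x : tensor U V) (y : tensor U' V') :
  tlift (fun u v => tlift (g u v) y) x = tlift (fun u' v' => tlift (fun u v => g u v u' v') x) y.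
Proof. exact: exchange_big. Qed.

Lemma tlift_tlift (R : comPzRingType) (U V U' V' W : lmodType R) (g : U' -> V' -> W)
    (f : U -> V -> tensor U' V') (x : tensor U V) :
  bilinear_map g -> tlift g (tlift f x) = tlift (fun u v => tlift g (f u v)) x.
Proof. by move=> bg; rewrite tlift_morph //; apply: tliftD. Qed.

Lemma tlift_tmulK (R : comPzRingType) (U V : lmodType R) (x : tensor U V) : tlift tmul x = x.
Proof.
apply: (additive_tensor_ext (G := id)) => // [a b|u v].
- exact/tliftD/tmul_bilinear.
- exact/tlift_tmul/tmul_bilinear.
Qed.

Section TensorMaps.
Variables (R : comPzRingType) (U V U' V' : lmodType R).

Lemma tmul_linearl (v : V) : klinear (tmul^~ v : U -> tensor U V).
Proof. by move=> a x y; rewrite (tmul_bilinear U V).1. Qed.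

Lemma tmul_linearr (u : U) : klinear (tmul u : V -> tensor U V).
Proof. by move=> a x y; rewrite (tmul_bilinear U V).2. Qed.

Lemma tmul_comp_bilinear (f : U -> U') (g : V -> V') :
  klinear f -> klinear g -> bilinear_map (fun u v => f u ⊗ g v).
Proof.
move=> hf hg; split=> [v a x y|u a x y]; first by rewrite hf (tmul_bilinear U' V').1.
by rewrite hg (tmul_bilinear U' V').2.
Qed.

Lemma tmap_tmul (f : U -> U') (g : V -> V') u v :
  klinear f -> klinear g -> tmap f g (u ⊗ v) = f u ⊗ g v.
Proof. by move=> hf hg; rewrite /tmap tlift_tmul //; apply: tmul_comp_bilinear. Qed.

Lemma tmap_linear (f : U -> U') (g : V -> V') :
  klinear f -> klinear g -> klinear (tmap f g).
Proof. by move=> hf hg; apply/tlift_linear/tmul_comp_bilinear. Qed.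

End TensorMaps.

Section GCoaction.
Variables (k : comPzRingType) (C : lmodType k) (DeltaC : C -> tensor C C) (epsC : C -> k).
Hypothesis coalgC : is_coalgebra DeltaC epsC.

Lemma counit_bilinear (M : lmodType k) : bilinear_map (fun (c : C) (m : M) => epsC c *: m).
Proof.
have [_ [epsL _]] := coalgC.
split=> [v a x y|u a x y]; first by rewrite epsL scalerDl scalerA.
by rewrite scalerDr !scalerA mulrC.
Qed.

Lemma Gco_inner_bilinear (N : lmodType k) (n : N) : bilinear_map (fun x y : C => x ⊗ (y ⊗ n)).
Proof. exact: tmul_comp_bilinear (tmul_linearl n). Qed.

Lemma Gco_bilinear (N : lmodType k) :
  bilinear_map (fun (c : C) (n : N) => tlift (fun c1 c2 => c1 ⊗ (c2 ⊗ n)) (DeltaC c)).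
Proof.
have [DeltaL _] := coalgC.
apply: bilinear_mapP => [n|c] b x y /=.
- by rewrite DeltaL (tlift_linear (Gco_inner_bilinear n)).
- apply: tlift_linear_param (fun n c1 c2 => c1 ⊗ (c2 ⊗ n)) _ _ _ _ _ => u v.
  by rewrite !tmul_linearr.
Qed.

Lemma Gco_linear (N : lmodType k) : klinear (@Gco k C DeltaC N).
Proof. exact: tlift_linear (Gco_bilinear N). Qed.

Lemma GcoD (N : lmodType k) : {morph @Gco k C DeltaC N : x y / x + y}.
Proof. exact: klinearD (@Gco_linear N). Qed.

Lemma Gco_tmul (N : lmodType k) c (n : N) :
  Gco DeltaC (c ⊗ n) = tlift (fun c1 c2 => c1 ⊗ (c2 ⊗ n)) (DeltaC c).
Proof. exact: tlift_tmul (Gco_bilinear N) _ _. Qed.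

Lemma Gco_tlift (N U V : lmodType k) (f : U -> V -> tensor C N) (z : tensor U V) :
  Gco DeltaC (tlift f z) = tlift (fun u v => Gco DeltaC (f u v)) z.
Proof. by symmetry; apply: tlift_morph; apply: GcoD. Qed.

Lemma Gco_counit (N : lmodType k) (m : tensor C N) :
  tlift (fun c m' => epsC c *: m') (Gco DeltaC m) = m.
Proof.
have [_ [_ [_ [counitC _]]]] := coalgC.
move: m; apply: (additive_tensor_ext (G := id)) => // [x y|c n] /=.
  by rewrite GcoD tliftD //; apply: counit_bilinear.
rewrite Gco_tmul (tlift_tlift _ _ (counit_bilinear _)).
rewrite -{2}(counitC c) -(tlift_morph _ _ (klinearD (tmul_linearl n))).
apply: eq_tlift => c1 c2; rewrite tlift_tmul; last exact: counit_bilinear.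
by rewrite (klinearZ (tmul_linearl n)).
Qed.

Lemma Gco_coassoc (N : lmodType k) (m : tensor C N) :
  tlift (fun c m' => tlift (fun x y => x ⊗ (y ⊗ m')) (DeltaC c)) (Gco DeltaC m)
  = tlift (fun c m' => c ⊗ Gco DeltaC m') (Gco DeltaC m).
Proof.
have [_ [_ [coassocC _]]] := coalgC.
have bR : bilinear_map (fun (c : C) (m' : tensor C N) => c ⊗ Gco DeltaC m').
  exact: tmul_comp_bilinear (@Gco_linear _).
move: m; apply: additive_tensor_ext => [x y|x y|c n] /=.
- by rewrite GcoD tliftD //; apply: Gco_bilinear.
- by rewrite GcoD tliftD.
have bPhi : bilinear_map (fun (u : C) (w : tensor C C) =>
    u ⊗ tlift (fun (y z : C) => y ⊗ (z ⊗ n)) w).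
  exact: tmul_comp_bilinear (tlift_linear (Gco_inner_bilinear n)).
rewrite Gco_tmul (tlift_tlift _ _ bR) (tlift_tlift _ _ (Gco_bilinear _)).
transitivity (tlift (fun (u : C) (w : tensor C C) => u ⊗ tlift (fun y z => y ⊗ (z ⊗ n)) w)
   (tlift (fun c1 c2 => tlift (fun x y => x ⊗ (y ⊗ c2)) (DeltaC c1)) (DeltaC c))).
- rewrite (tlift_tlift _ _ bPhi); apply: eq_tlift => c1 c2.
  rewrite tlift_tmul; last exact: Gco_bilinear.
  rewrite (tlift_tlift _ _ bPhi); apply: eq_tlift => x y.
  by rewrite tlift_tmul // tlift_tmul //; apply: Gco_inner_bilinear.
- rewrite coassocC (tlift_tlift _ _ bPhi); apply: eq_tlift => c1 c2.
  by rewrite tlift_tmul // (tlift_tmul bR) Gco_tmul.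
Qed.

Lemma Gco_tmap (N N' : lmodType k) (g : N -> N') (x : tensor C N) :
  klinear g -> Gco DeltaC (tmap id g x) = tmap id (tmap id g) (Gco DeltaC x).
Proof.
move=> g_linear; have idL := @klinear_id _ C.
have tmapL := tmap_linear idL (tmap_linear idL g_linear).
move: x; apply: additive_tensor_ext => [x y|x y|c n] /=.
- by rewrite (klinearD (tmap_linear idL g_linear)) GcoD.
- by rewrite GcoD (klinearD tmapL).
have bT := tmul_comp_bilinear idL (tmap_linear idL g_linear).
rewrite tmap_tmul // !Gco_tmul {1}/tmap (tlift_tlift _ _ bT).
by apply: eq_tlift => c1 c2; rewrite tlift_tmul // !tmap_tmul.
Qed.

Lemma counit_tmap (N N' : lmodType k) (g : N -> N') (x : tensor C N) :
  klinear g ->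
  tlift (fun c n' => epsC c *: n') (tmap id g x) = g (tlift (fun c n => epsC c *: n) x).
Proof.
move=> g_linear; have tmapL := tmap_linear (@klinear_id _ C) g_linear.
move: x; apply: additive_tensor_ext => [x y|x y|c n] /=.
- by rewrite (klinearD tmapL) tliftD //; apply: counit_bilinear.
- by rewrite tliftD ?(klinearD g_linear) //; apply: counit_bilinear.
rewrite tmap_tmul // !tlift_tmul ?(klinearZ g_linear) //; exact: counit_bilinear.
Qed.

End GCoaction.

Section DoiHopfDatum.
Variables (k : comPzRingType) (H A : algType k) (DeltaH : H -> tensor H H) (epsH : H -> k)
  (rhoA : A -> tensor H A) (C : lmodType k) (DeltaC : C -> tensor C C) (epsC : C -> k)
  (actC : C -> H -> C).
Hypothesis comodA : is_comodule_algebra DeltaH epsH rhoA.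
Hypothesis modC : is_module_coalgebra DeltaH epsH DeltaC epsC actC.

Let coalgC : is_coalgebra DeltaC epsC. Proof. by case: modC. Qed.
Let actC_bilinear : bilinear_map actC. Proof. by case: modC => _ []. Qed.

Local Notation Gact := (Gact rhoA actC).
Local Notation Gco := (@Gco _ C DeltaC _).

Section GModule.
Variables (N : lmodType k) (actN : N -> A -> N).
Hypothesis actN_bilinear : bilinear_map actN.

Lemma Gact_inner_bilinear c n : bilinear_map (fun h a' => actC c h ⊗ actN n a').
Proof.
apply: tmul_comp_bilinear => a x y; [exact: actC_bilinear.2 | exact: actN_bilinear.2].
Qed.

Lemma Gact_fun_bilinear a :
  bilinear_map (fun c n => tlift (fun h a' => actC c h ⊗ actN n a') (rhoA a)).
Proof.
apply: bilinear_mapP => [n|c] b x y.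
- apply: tlift_linear_param (fun c h a' => actC c h ⊗ actN n a') _ _ _ _ _ => u v.
  by rewrite actC_bilinear.1 tmul_linearl.
- apply: tlift_linear_param (fun n h a' => actC c h ⊗ actN n a') _ _ _ _ _ => u v.
  by rewrite actN_bilinear.1 tmul_linearr.
Qed.

Lemma Gact_tmul c n a : Gact actN (c ⊗ n) a = tlift (fun h a' => actC c h ⊗ actN n a') (rhoA a).
Proof. exact: tlift_tmul (Gact_fun_bilinear a) _ _. Qed.

Lemma Gact_bilinear : bilinear_map (Gact actN).
Proof.
have [rhoL _] := comodA.
split=> [a b x y|x b a a'].
  by rewrite /Defs.Gact (tlift_linear (Gact_fun_bilinear a)).
apply: tlift_linear_param
  (fun a c n => tlift (fun h a' => actC c h ⊗ actN n a') (rhoA a)) _ _ _ _ _.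
by move=> c n; rewrite rhoL (tlift_linear (Gact_inner_bilinear c n)).
Qed.

Lemma GactD a : {morph Gact actN ^~ a : x y / x + y}.
Proof. by apply: klinearD => b x y; apply: Gact_bilinear.1. Qed.

Lemma Gact_tlift (U V : lmodType k) (f : U -> V -> tensor C N) z a :
  Gact actN (tlift f z) a = tlift (fun u v => Gact actN (f u v) a) z.
Proof. by symmetry; apply: tlift_morph; apply: GactD. Qed.

Lemma Gact1 : (forall n, actN n 1 = n) -> forall x, Gact actN x 1 = x.
Proof.
move=> actN1 x; have [_ [_ [_ [_ rho1]]]] := comodA; have [_ [_ [actC1 _]]] := modC.
rewrite /Defs.Gact rho1 -[RHS]tlift_tmulK; apply: eq_tlift => c n.
by rewrite tlift_tmul ?actC1 ?actN1 //; apply: Gact_inner_bilinear.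
Qed.

Lemma GactA : (forall n a b, actN (actN n a) b = actN n (a * b)) ->
  forall x a b, Gact actN (Gact actN x a) b = Gact actN x (a * b).
Proof.
move=> actNA x a b; move: x; apply: additive_tensor_ext => [x y|x y|c n] /=.
- by rewrite !GactD.
- by rewrite !GactD.
have [_ [_ [_ [rhoM _]]]] := comodA; have [_ [_ [_ [actCA _]]]] := modC.
rewrite !Gact_tmul Gact_tlift rhoM /tensor_mul tlift_tlift; last exact: Gact_inner_bilinear.
apply: eq_tlift => h a'; rewrite Gact_tmul tlift_tlift; last exact: Gact_inner_bilinear.
apply: eq_tlift => h' b'.
by rewrite tlift_tmul ?actCA ?actNA //; apply: Gact_inner_bilinear.
Qed.

End GModule.

Section GObject.
Variables (N : lmodType k) (actN : N -> A -> N).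
Hypothesis actN_bilinear : bilinear_map actN.

Lemma Gco_Gact x a : Gco (Gact actN x a) = Gact (Gact actN) (Gco x) a.
Proof.
have bG := Gact_bilinear actN_bilinear.
have [_ [_ [_ [DeltaC_act _]]]] := modC.2.
move: x; apply: additive_tensor_ext => [x y|x y|c n] /=.
- by rewrite (GactD actN_bilinear) (GcoD coalgC).
- by rewrite (GcoD coalgC) (GactD bG).
rewrite Gact_tmul // (Gco_tlift coalgC) (Gco_tmul coalgC) (Gact_tlift bG).
have GcoE h a' : Gco (actC c h ⊗ actN n a') =
    tlift (fun c1 c2 => tlift (fun h1 h2 => actC c1 h1 ⊗ (actC c2 h2 ⊗ actN n a')) (DeltaH h))
      (DeltaC c).
  rewrite (Gco_tmul coalgC) DeltaC_act (tlift_tlift _ _ (Gco_inner_bilinear _ _)).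
  apply: eq_tlift => c1 c2; rewrite (tlift_tlift _ _ (Gco_inner_bilinear _ _)).
  by apply: eq_tlift => h1 h2; rewrite tlift_tmul //; exact: Gco_inner_bilinear.
rewrite (eq_tlift _ GcoE) exchange_tlift; apply: eq_tlift => c1 c2.
have [_ [coassocA _]] := comodA.
have bPsi : bilinear_map (fun (u : H) (w : tensor H A) =>
    actC c1 u ⊗ tlift (fun h a'' => actC c2 h ⊗ actN n a'') w).
  apply: tmul_comp_bilinear (tlift_linear (Gact_inner_bilinear actN_bilinear c2 n)).
  by move=> b x y; apply: actC_bilinear.2.
transitivity (tlift (fun (u : H) (w : tensor H A) =>
    actC c1 u ⊗ tlift (fun h a'' => actC c2 h ⊗ actN n a'') w)
    (tlift (fun h a' => tlift (fun x y => x ⊗ (y ⊗ a')) (DeltaH h)) (rhoA a))).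
- rewrite (tlift_tlift _ _ bPsi); apply: eq_tlift => h a'.
  rewrite (tlift_tlift _ _ bPsi); apply: eq_tlift => h1 h2.
  by rewrite !tlift_tmul //; exact: (Gact_inner_bilinear actN_bilinear c2 n).
- rewrite (coassocA a) (tlift_tlift _ _ bPsi) (Gact_tmul bG).
  by apply: eq_tlift => h a'; rewrite tlift_tmul // Gact_tmul.
Qed.

Lemma G_doi_hopf_module :
  (forall n, actN n 1 = n) -> (forall n a b, actN (actN n a) b = actN n (a * b)) ->
  is_doi_hopf_module rhoA DeltaC epsC actC (Gact actN) Gco.
Proof.
move=> actN1 actNA.
split; first exact: (Gact_bilinear actN_bilinear).
split; first exact: (Gact1 actN_bilinear actN1).
split; first exact: (GactA actN_bilinear actNA).
split; first exact: (Gco_linear coalgC).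
split; first exact: (Gco_coassoc coalgC).
split; first exact: (Gco_counit coalgC).
exact: Gco_Gact.
Qed.

Variables (N' : lmodType k) (actN' : N' -> A -> N') (g : N -> N').
Hypotheses (actN'_bilinear : bilinear_map actN') (g_linear : klinear g).
Hypothesis g_actE : forall n a, g (actN n a) = actN' (g n) a.

Lemma Gact_tmap x a : tmap id g (Gact actN x a) = Gact actN' (tmap id g x) a.
Proof.
have idL := @klinear_id _ C.
have tmapD := klinearD (tmap_linear idL g_linear).
move: x; apply: additive_tensor_ext => [x y|x y|c n] /=.
- by rewrite (GactD actN_bilinear) tmapD.
- by rewrite tmapD (GactD actN'_bilinear).
rewrite tmap_tmul // !Gact_tmul // /tmap (tlift_tlift _ _ (tmul_comp_bilinear idL g_linear)).
by apply: eq_tlift => h a'; rewrite tlift_tmul ?g_actE //; apply: tmul_comp_bilinear.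
Qed.

Lemma G_morphism (hN : is_doi_hopf_module rhoA DeltaC epsC actC (Gact actN) Gco)
    (hN' : is_doi_hopf_module rhoA DeltaC epsC actC (Gact actN') Gco) :
  dh_morphism (M := DHMod hN) (N := DHMod hN') (tmap id g).
Proof.
split; first exact: tmap_linear.
split; first exact: Gact_tmap.
by move=> x; apply: (Gco_tmap coalgC).
Qed.

End GObject.

Definition GF (M : dhmod rhoA DeltaC epsC actC) : dhmod rhoA DeltaC epsC actC :=
  DHMod (G_doi_hopf_module (dh_ax M).1 (dh_ax M).2.1 (dh_ax M).2.2.1).

Lemma coaction_morphism (M : dhmod rhoA DeltaC epsC actC) :
  dh_morphism (M := M) (N := GF M) (@dh_co _ _ _ _ _ _ _ _ M).
Proof.
have [_ [_ [_ [coL [coA [_ coAct]]]]]] := dh_ax M.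
by split; [exact: coL | split; [exact: coAct | exact: coA]].
Qed.

Section NatTransGF.
Variable nu : forall M : dhmod rhoA DeltaC epsC actC, tensor C (dh_car M) -> dh_car M.
Hypothesis nu_nat : is_nat_trans_GF nu.
Hypothesis hGA : is_doi_hopf_module rhoA DeltaC epsC actC (Gact (fun m a : A => m * a)) Gco.

Local Notation GA := (DHMod hGA).
Local Notation GFGA := (GF GA).
Local Notation nuA := (@nu GA).
Local Notation actGA := (Gact (fun m a : A => m * a)).

Let mulA_bilinear := @mulr_bilinear k A.
Let actGA_bilinear := Gact_bilinear mulA_bilinear.

Lemma nu_GA_mull (a b : A) (c d : C) :
  nuA (c ⊗ (d ⊗ (b * a))) = tmap id (fun a' : A => b * a') (nuA (c ⊗ (d ⊗ a))).
Proof.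
have mulbL : klinear (fun a' : A => b * a') by move=> r x y; apply: mulA_bilinear.2.
have mor := G_morphism mulA_bilinear mulA_bilinear mulbL (mulrA b) hGA hGA.
by rewrite (nu_nat.2 _ _ _ mor) !tmap_tmul //; apply: tmap_linear.
Qed.

Lemma nu_GFGA_tmul (c d : C) (n : tensor C A) :
  @nu GFGA (c ⊗ (d ⊗ n)) = tmap id (actGA n) (nuA (c ⊗ (d ⊗ 1))).
Proof.
have actnL : klinear (actGA n) by move=> r x y; apply: actGA_bilinear.2.
have actn_actE a' a : actGA n (a' * a) = actGA (actGA n a') a.
  by rewrite (GactA mulA_bilinear) // => *; rewrite mulrA.
have mor := G_morphism mulA_bilinear actGA_bilinear actnL actn_actE hGA (dh_ax GFGA).
rewrite (nu_nat.2 _ _ _ mor) !tmap_tmul ?(Gact1 mulA_bilinear) //; last exact: tmap_linear.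
by move=> a'; rewrite mulr1.
Qed.

Lemma nu_GA_unit (c d : C) :
  tlift (fun d1 d2 => tlift (fun h a' => actC d2 h ⊗ a')
           (rhoA (tlift (fun c' a' => epsC c' *: a') (nuA (c ⊗ (d1 ⊗ 1))))))
    (DeltaC d)
  = nuA (c ⊗ (d ⊗ 1)).
Proof.
have [_ [_ [_ [_ [_ [GA_counit _]]]]]] := hGA.
have [nuL _] := nu_nat.1 GFGA.
have nat_co := nu_nat.2 _ _ _ (coaction_morphism GA) (c ⊗ (d ⊗ 1)).
rewrite -[RHS]GA_counit [LHS in _ = tlift _ LHS]nat_co /=.
rewrite tmap_tmul ?(Gco_tmul coalgC) //; last exact: (Gco_linear coalgC).
rewrite -(tlift_morph _ _ (klinearD (tmul_linearr c))) -(tlift_morph _ _ (klinearD nuL)).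
rewrite (tlift_tlift _ _ (counit_bilinear coalgC _)); apply: eq_tlift => d1 d2.
rewrite nu_GFGA_tmul (counit_tmap coalgC); last by move=> r x y; apply: actGA_bilinear.2.
by rewrite Gact_tmul //; apply: eq_tlift => h a'; rewrite mul1r.
Qed.

End NatTransGF.

End DoiHopfDatum.

Unset Implicit Arguments. Set Strict Implicit.

Theorem lemma2p1p1 (k : comPzRingType)
  (H : algType k) (DeltaH : H -> tensor H H) (epsH : H -> k)
  (A : algType k) (rhoA : A -> tensor H A)
  (C : lmodType k) (DeltaC : C -> tensor C C) (epsC : C -> k) (actC : C -> H -> C) :
  is_hopf_algebra DeltaH epsH ->
  is_comodule_algebra DeltaH epsH rhoA ->
  is_module_coalgebra DeltaH epsH DeltaC epsC actC ->
  flat C ->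
  forall nu : forall M : dhmod rhoA DeltaC epsC actC, tensor C (dh_car M) -> dh_car M,
  is_nat_trans_GF nu ->
  forall hGA : is_doi_hopf_module rhoA DeltaC epsC actC
                 (Gact rhoA actC (fun m a : A => m * a)) (@Gco _ C DeltaC A),
  let nuA := nu (DHMod hGA) in
  (forall (a b : A) (c d : C),
     nuA (c ⊗ (d ⊗ (b * a))) = tlift (fun (c' : C) (a' : A) => c' ⊗ (b * a')) (nuA (c ⊗ (d ⊗ a)))) /\
  (forall c d : C,
     let theta := fun d' : C => tlift (fun (c' : C) (a' : A) => epsC c' *: a') (nuA (c ⊗ (d' ⊗ 1))) in
     tlift (fun d1 d2 : C => tlift (fun (h : H) (a' : A) => actC d2 h ⊗ a') (rhoA (theta d1))) (DeltaC d)
     = nuA (c ⊗ (d ⊗ 1))).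
Proof.
move=> _ comodA modC _ nu nu_nat hGA nuA.
split=> [a b c d|c d theta]; first exact: (nu_GA_mull comodA modC nu_nat).
exact: (nu_GA_unit comodA modC nu_nat).
Qed.
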